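(* Let $K$ be an algebraically closed field, $m\ge1$ and $2\le a\le b$ integers, $S=K[[x,y_1,\dots,y_m]]$, $g=g(y_1,\dots,y_m)\in(\underline{y})^b\setminus(\underline{y})^{b+1}$, $A=S/(x^a-g)$, $Q=(y_1,\dots,y_m)A$. Let $d=\gcd(a,b)$, $a'=a/d$, $b'=b/d$, $n_k=\lfloor kb/a\rfloor$ for $k=1,\dots,a-1$, and for $n\ge1$ define \[J_n=Q^n+xQ^{n-n_1}+x^2Q^{n-n_2}+\cdots+x^{a-1}Q^{n-n_{a-1}},\] \[I_n=\big(x^ky_1^{i_1}\cdots y_m^{i_m} : k,i_1,\dots,i_m\in\mathbb{Z}_{\ge0},\ kb'+(i_1+\cdots+i_m)a'\ge n\big)A.\] Then $J_n=I_{na'}$ for every $n\ge1$.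
   Context: $(\underline{y})=(y_1,\dots,y_m)$; by convention $Q^j=A$ for $j\le0$. *)

From mathcomp Require Import all_boot all_order all_algebra.
Set Implicit Arguments. Unset Strict Implicit. Unset Printing Implicit Defensive.
Import GRing.Theory.
Local Open Scope ring_scope.

Section Ideals.
Variables (T : Type) (add mul : T -> T -> T) (zero one : T).

Definition is_ideal (I : T -> Prop) : Prop :=
  [/\ I zero, (forall u v, I u -> I v -> I (add u v))
    & (forall r u, I u -> I (mul r u))].

Definition ideal_gen (G : T -> Prop) : T -> Prop :=
  fun z => forall I, is_ideal I -> (forall u, G u -> I u) -> I z.

Definition principal (u : T) : T -> Prop := ideal_gen (fun z => z = u).

Definition ideal_sum (I J : T -> Prop) : T -> Prop :=
  ideal_gen (fun z => I z \/ J z).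

Definition ideal_mul (I J : T -> Prop) : T -> Prop :=
  ideal_gen (fun z => exists u v, [/\ I u, J v & z = mul u v]).

Definition ideal_pow (I : T -> Prop) (n : nat) : T -> Prop :=
  iter n (ideal_mul I) (principal one).

End Ideals.

(* exponents of monomials x^k y^alpha *)
Definition mon (m : nat) := (nat * {ffun 'I_m -> nat})%type.

(* formal power series over K in x, y_1..y_m: arbitrary coefficient maps *)
Definition ps (K : fieldType) (m : nat) := mon m -> K.

Section PS.
Variables (K : fieldType) (m : nat).

Definition ps_ind (e0 : mon m) : ps K m := fun e => if e == e0 then 1 else 0.
Definition ps_zero : ps K m := fun _ => 0.
Definition ps_one : ps K m := ps_ind (0%N, [ffun => 0%N]).
Definition ps_add (f g : ps K m) : ps K m := fun e => f e + g e.
Definition ps_opp (f : ps K m) : ps K m := fun e => - f e.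
Definition ps_sub (f g : ps K m) : ps K m := ps_add f (ps_opp g).
(* Cauchy product: sum over all exponent decompositions e = e1 + e2 *)
Definition ps_mul (f g : ps K m) : ps K m := fun e =>
  \sum_(k < e.1.+1)
   \sum_(t : {ffun 'I_m -> 'I_(\max_(i : 'I_m) e.2 i).+1}
          | [forall i, (t i <= e.2 i)%N])
     f (k : nat, [ffun i => nat_of_ord (t i)]) *
     g ((e.1 - k)%N, [ffun i => (e.2 i - t i)%N]).
Definition ps_pow (f : ps K m) (n : nat) : ps K m := iter n (ps_mul f) ps_one.

Definition ps_x : ps K m := ps_ind (1%N, [ffun => 0%N]).
Definition ps_y (i : 'I_m) : ps K m :=
  ps_ind (0%N, [ffun j => nat_of_bool (j == i)]).
Definition ps_ymon (al : {ffun 'I_m -> nat}) : ps K m :=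
  foldr (fun i acc => ps_mul (ps_pow (ps_y i) (al i)) acc) ps_one (enum 'I_m).

Definition Sideal_gen := ideal_gen ps_add ps_mul ps_zero.
Definition Sprincipal := principal ps_add ps_mul ps_zero.
Definition Sideal_sum := ideal_sum ps_add ps_mul ps_zero.
Definition Sideal_mul := ideal_mul ps_add ps_mul ps_zero.
Definition Sideal_pow := ideal_pow ps_add ps_mul ps_zero ps_one.

Definition Yideal : ps K m -> Prop := Sideal_gen (fun z => exists i, z = ps_y i).

Definition only_y (g : ps K m) : Prop := forall e : mon m, e.1 <> 0%N -> g e = 0.

(* lifts to S of J_n and I_N (both taken modulo (x^a - g) in the theorem) *)
Definition nk (a b k : nat) : nat := (k * b %/ a)%N.

Definition JS (a b n : nat) : ps K m -> Prop :=
  \big[Sideal_sum/Sideal_gen (fun _ => False)]_(k < a)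
     Sideal_mul (Sprincipal (ps_pow ps_x k)) (Sideal_pow Yideal (n - nk a b k)).

Definition IS (a' b' N : nat) : ps K m -> Prop :=
  Sideal_gen (fun z => exists (k : nat) (al : {ffun 'I_m -> nat}),
     (N <= k * b' + (\sum_(i < m) al i) * a')%N /\
     z = ps_mul (ps_pow ps_x k) (ps_ymon al)).

End PS.

(* Modulo f = x^a - g both ideals are generated by monomials x^k y^al, and the
   right notion of size is the weight k b' + |al| a'.  Since
   n - floor(k b'/a') <= s  <->  n a' <= k b' + s a',
   the generators x^k y^al (k < a, |al| >= n - n_k) of J_n are exactly the
   monomials of weight >= n a' with k < a; in particular J_n <= I_{na'} already
   in S.  A monomial of weight >= n a' with k >= a is rewritten as
   x^(k-a) y^al f + x^(k-a) y^al g; as g lies in (y)^b and a b' = b a', the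
   second term is a combination of monomials of no smaller weight and smaller
   x-degree, so induction on k finishes.  Only a > 0 and g in (y)^b are used. *)

From mathcomp Require Import all_boot all_order all_algebra.
From mathcomp Require Import zify.
From Stdlib Require Import FunctionalExtensionality.
Set Implicit Arguments. Unset Strict Implicit. Unset Printing Implicit Defensive.
Import GRing.Theory.

Section Exponents.
Variable m : nat.

Definition mzero : mon m := (0%N, [ffun => 0%N]).
Definition madd (e1 e2 : mon m) : mon m :=
  ((e1.1 + e2.1)%N, [ffun i => (e1.2 i + e2.2 i)%N]).
Definition msub (e1 e2 : mon m) : mon m :=
  ((e1.1 - e2.1)%N, [ffun i => (e1.2 i - e2.2 i)%N]).
Definition mle (e1 e2 : mon m) : bool :=
  (e1.1 <= e2.1)%N && [forall i, (e1.2 i <= e2.2 i)%N].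
Definition mdeg (e : mon m) : nat := (\sum_(i < m) e.2 i)%N.

Lemma monP (e1 e2 : mon m) :
  e1.1 = e2.1 -> (forall i, e1.2 i = e2.2 i) -> e1 = e2.
Proof.
by case: e1 e2 => [k1 a1] [k2 a2] /= -> H; congr pair; apply/ffunP.
Qed.

Lemma mleP (e1 e2 : mon m) :
  reflect ((e1.1 <= e2.1)%N /\ forall i, (e1.2 i <= e2.2 i)%N) (mle e1 e2).
Proof. by apply: (iffP andP) => -[h /forallP h2]. Qed.

Ltac mon_split := first [ apply/mleP; split => [|i]; rewrite /= ?ffunE
                      | apply: monP => [|i]; rewrite /= ?ffunE ].

Lemma msubK (e p : mon m) : mle p e -> msub e (msub e p) = p.
Proof. by move/mleP=> [h1 h2]; mon_split; [lia | have := h2 i; lia]. Qed.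

Lemma mle_msub (e p : mon m) : mle (msub e p) e.
Proof. by mon_split; lia. Qed.

Lemma maddKm (q r : mon m) : msub (madd q r) q = r.
Proof. by mon_split; lia. Qed.

Lemma msubDr (e q r : mon m) : msub e (madd q r) = msub (msub e q) r.
Proof. by mon_split; lia. Qed.

Lemma msubKC (q p : mon m) : mle q p -> madd q (msub p q) = p.
Proof. by move/mleP=> [h1 h2]; mon_split; [lia | have := h2 i; lia]. Qed.

Lemma mle_trans (e1 e2 e3 : mon m) : mle e1 e2 -> mle e2 e3 -> mle e1 e3.
Proof.
move=> /mleP[h1 h2] /mleP[h3 h4]; mon_split; first lia.
by have := h2 i; have := h4 i; lia.
Qed.

Lemma mle_madd_msub (e q r : mon m) : mle q e -> mle r (msub e q) -> mle (madd q r) e.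
Proof.
move=> /mleP[h1 h2] /mleP[/= h3 h4]; mon_split; first lia.
by have := h2 i; have := h4 i; rewrite ffunE; lia.
Qed.

Lemma maddC (e1 e2 : mon m) : madd e1 e2 = madd e2 e1.
Proof. by mon_split; lia. Qed.

Lemma mle_maddr (q r : mon m) : mle q (madd q r).
Proof. by mon_split; lia. Qed.

Lemma mle_msub2r (e p q : mon m) : mle q p -> mle p e -> mle (msub p q) (msub e q).
Proof.
move=> /mleP[h1 h2] /mleP[h3 h4]; mon_split; first lia.
by have := h2 i; have := h4 i; lia.
Qed.

Lemma mle0m (e : mon m) : mle mzero e.
Proof. by mon_split. Qed.

Lemma msubm0 (e : mon m) : msub e mzero = e.
Proof. by mon_split; lia. Qed.

Lemma mdeg_madd (e1 e2 : mon m) : mdeg (madd e1 e2) = (mdeg e1 + mdeg e2)%N.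
Proof. by rewrite /mdeg -big_split; apply: eq_bigr => i _; rewrite ffunE. Qed.

Definition mbnd (e : mon m) := (\max_(i : 'I_m) e.2 i).+1.

(* The exponents [p <= e], enumerated exactly as in the index range of [ps_mul]. *)
Definition mbelow (e : mon m) : seq (mon m) :=
  [seq (k, [ffun i => nat_of_ord (t i)]) : mon m
     | k <- iota 0 e.1.+1,
       t : {ffun 'I_m -> 'I_(mbnd e)}
         <- enum [pred t : {ffun 'I_m -> 'I_(mbnd e)} | [forall i, (t i <= e.2 i)%N]]].

Lemma mbelow_uniq (e : mon m) : uniq (mbelow e).
Proof.
apply: allpairs_uniq; [exact: iota_uniq | exact: enum_uniq | ].
move=> [k1 t1] [k2 t2] _ _ /= [-> /ffunP H]; congr pair; apply/ffunP => i.
by apply/val_inj; have := H i; rewrite !ffunE.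
Qed.

Lemma mem_mbelow (e p : mon m) : (p \in mbelow e) = mle p e.
Proof.
apply/allpairsP/mleP => [[[k t]] [hk ht ->]|[h1 h2]].
  move: hk ht; rewrite mem_iota mem_enum inE /= => hk /forallP ht.
  by split => [|i]; [lia | rewrite ffunE ht].
have hb i : (p.2 i < mbnd e)%N.
  by rewrite /mbnd ltnS; exact: leq_trans (h2 i) (leq_bigmax i).
exists (p.1, [ffun i => inord (p.2 i) : 'I_(mbnd e)]); split.
- by rewrite mem_iota /=; lia.
- by rewrite mem_enum inE; apply/forallP => i; rewrite ffunE inordK.
- by apply: monP => //= i; rewrite !ffunE inordK.
Qed.

End Exponents.

Section PowerSeriesRing.
Variables (K : fieldType) (m : nat).
Local Open Scope ring_scope.
Local Notation PS := (ps K m).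

Lemma ps_ext (f g : PS) : (forall e, f e = g e) -> f = g.
Proof. exact: functional_extensionality. Qed.

Lemma ps_mulE (f g : PS) (e : mon m) :
  ps_mul f g e = \sum_(p <- mbelow e) f p * g (msub e p).
Proof.
rewrite /ps_mul big_allpairs_dep -val_enum_ord big_map big_enum /=.
apply: eq_bigr => k _; rewrite big_enum /=.
apply: eq_big => [t|t _]; first by rewrite inE.
by congr (_ * g _); apply: monP => //= i; rewrite !ffunE.
Qed.

Lemma ps_mul_indl (e0 : mon m) (f : PS) (e : mon m) :
  ps_mul (ps_ind K e0) f e = if mle e0 e then f (msub e e0) else 0.
Proof.
rewrite ps_mulE /ps_ind; case: ifP => h.
  rewrite (bigD1_seq e0) ?mbelow_uniq ?mem_mbelow //= eqxx mul1r big1 ?addr0 //.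
  by move=> p /negbTE ->; rewrite mul0r.
rewrite big1_seq // => p /andP[_]; rewrite mem_mbelow => hp.
by case: eqP => [ep|]; [move: h; rewrite -ep hp | rewrite mul0r].
Qed.

Lemma ps_mulC (f g : PS) : ps_mul f g = ps_mul g f.
Proof.
apply: ps_ext => e; rewrite !ps_mulE.
have perm_compl : perm_eq (mbelow e) (map (msub e) (mbelow e)).
  apply: uniq_perm; rewrite ?mbelow_uniq //.
    rewrite map_inj_in_uniq ?mbelow_uniq // => p1 p2; rewrite !mem_mbelow => h1 h2 eq.
    by rewrite -(msubK h1) eq msubK.
  move=> q; rewrite mem_mbelow; apply/idP/mapP => [h|[p _ ->]]; last exact: mle_msub.
  by exists (msub e q); rewrite ?mem_mbelow ?mle_msub ?msubK.
rewrite (perm_big _ perm_compl) big_map big_seq [RHS]big_seq; apply: eq_bigr => p.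
by rewrite mem_mbelow => h; rewrite msubK // mulrC.
Qed.

Lemma sum_mbelow_le (e p : mon m) (F : mon m -> K) : mle p e ->
  \sum_(q <- mbelow p) F q = \sum_(q <- mbelow e | mle q p) F q.
Proof.
move=> hp; rewrite -[RHS]big_filter; apply/perm_big/uniq_perm.
- exact: mbelow_uniq.
- by rewrite filter_uniq ?mbelow_uniq.
move=> q; rewrite mem_filter !mem_mbelow; case h: (mle q p) => //=.
by rewrite (mle_trans h hp).
Qed.

Lemma sum_mbelow_ge (e q : mon m) (F : mon m -> K) : mle q e ->
  \sum_(p <- mbelow e | mle q p) F p = \sum_(r <- mbelow (msub e q)) F (madd q r).
Proof.
move=> hq; rewrite -big_filter -(big_map (madd q) xpredT); apply/perm_big/uniq_perm.
- by rewrite filter_uniq ?mbelow_uniq.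
- rewrite map_inj_in_uniq ?mbelow_uniq // => r1 r2 _ _ eq.
  by rewrite -(maddKm q r1) eq maddKm.
move=> p; rewrite mem_filter mem_mbelow; apply/andP/mapP => [[h1 h2]|[r]].
  by exists (msub p q); rewrite ?mem_mbelow ?mle_msub2r ?msubKC.
by rewrite mem_mbelow => hr ->; split; [exact: mle_maddr | exact: mle_madd_msub].
Qed.

Lemma ps_mulA (f g h : PS) : ps_mul f (ps_mul g h) = ps_mul (ps_mul f g) h.
Proof.
apply: ps_ext => e.
transitivity (\sum_(p <- mbelow e) \sum_(q <- mbelow e)
                (if mle q p then f q * g (msub p q) * h (msub e p) else 0)).
  rewrite exchange_big ps_mulE big_seq [RHS]big_seq; apply: eq_bigr => q.
  rewrite mem_mbelow => hq; rewrite -big_mkcond /= (sum_mbelow_ge _ hq) ps_mulE mulr_sumr.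
  by apply: eq_bigr => r _; rewrite maddKm msubDr mulrA.
rewrite [RHS]ps_mulE big_seq [RHS]big_seq; apply: eq_bigr => p.
rewrite mem_mbelow => hp.
by rewrite ps_mulE mulr_suml (sum_mbelow_le _ hp) [RHS]big_mkcond.
Qed.

Lemma ps_mulCA (f g h : PS) : ps_mul f (ps_mul g h) = ps_mul g (ps_mul f h).
Proof. by rewrite ps_mulA (ps_mulC f) -ps_mulA. Qed.

Lemma ps_mulDr (f g h : PS) : ps_mul f (ps_add g h) = ps_add (ps_mul f g) (ps_mul f h).
Proof.
by apply: ps_ext => e; rewrite /ps_add !ps_mulE -big_split; apply: eq_bigr => p _; rewrite mulrDr.
Qed.

Lemma ps_mulrN (f g : PS) : ps_mul f (ps_opp g) = ps_opp (ps_mul f g).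
Proof.
by apply: ps_ext => e; rewrite /ps_opp !ps_mulE -sumrN; apply: eq_bigr => p _; rewrite mulrN.
Qed.

Lemma ps_mulr0 (f : PS) : ps_mul f (@ps_zero K m) = @ps_zero K m.
Proof. by apply: ps_ext => e; rewrite ps_mulE big1 // => p _; rewrite mulr0. Qed.

Lemma ps_mul1r (f : PS) : ps_mul (@ps_one K m) f = f.
Proof. by apply: ps_ext => e; rewrite ps_mul_indl (mle0m e) msubm0. Qed.

Lemma ps_mulr1 (f : PS) : ps_mul f (@ps_one K m) = f.
Proof. by rewrite ps_mulC ps_mul1r. Qed.

Lemma ps_ind_mul (e1 e2 : mon m) :
  ps_mul (ps_ind K e1) (ps_ind K e2) = ps_ind K (madd e1 e2).
Proof.
apply: ps_ext => e; rewrite ps_mul_indl /ps_ind.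
have [->|ne] := eqVneq e (madd e1 e2); first by rewrite mle_maddr maddKm eqxx.
case: ifP => // h; case: eqP => // eq.
by case/eqP: ne; rewrite -eq msubKC.
Qed.

Lemma ps_pow_x k : ps_pow (@ps_x K m) k = ps_ind K ((k, [ffun => 0%N]) : mon m).
Proof.
elim: k => [//|k IH]; rewrite [ps_pow _ _]/= IH /ps_x ps_ind_mul.
by congr ps_ind; apply: monP => //= i; rewrite !ffunE.
Qed.

Lemma ps_pow_y (i : 'I_m) j :
  ps_pow (ps_y K i) j = ps_ind K ((0%N, [ffun l => (j * (l == i))%N]) : mon m).
Proof.
elim: j => [|j IH].
  by congr ps_ind; apply: monP => //= l; rewrite !ffunE.
rewrite [ps_pow _ _]/= IH /ps_y ps_ind_mul.
by congr ps_ind; apply: monP => //= l; rewrite !ffunE; lia.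
Qed.

Lemma ps_ymonE (al : {ffun 'I_m -> nat}) : ps_ymon K al = ps_ind K ((0%N, al) : mon m).
Proof.
have foldE (s : seq 'I_m) :
    foldr (fun i acc => ps_mul (ps_pow (ps_y K i) (al i)) acc) (@ps_one K m) s =
    ps_ind K ((0%N, [ffun l => (\sum_(i <- s) al i * (l == i))%N]) : mon m).
  elim: s => [|i s IH] /=.
    by congr ps_ind; apply: monP => //= l; rewrite !ffunE big_nil.
  rewrite IH ps_pow_y ps_ind_mul.
  by congr ps_ind; apply: monP => //= l; rewrite !ffunE big_cons.
rewrite /ps_ymon foldE; congr ps_ind; apply: monP => //= l.
rewrite !ffunE big_enum /= (bigD1 l) //= eqxx muln1 big1 ?addn0 // => i /negbTE.
by rewrite eq_sym => ->; rewrite muln0.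
Qed.

Lemma ps_monomialE k (al : {ffun 'I_m -> nat}) :
  ps_mul (ps_pow (@ps_x K m) k) (ps_ymon K al) = ps_ind K ((k, al) : mon m).
Proof.
rewrite ps_pow_x ps_ymonE ps_ind_mul.
by congr ps_ind; apply: monP => /= [|l]; rewrite ?ffunE; lia.
Qed.

End PowerSeriesRing.

Section IdealGen.
Variables (T : Type) (add mul : T -> T -> T) (zero : T).
Local Notation isI := (is_ideal add mul zero).
Local Notation gen := (ideal_gen add mul zero).
Local Notation "\bigsum_ ( i <- r ) F" :=
  (\big[ideal_sum add mul zero/gen (fun _ => False)]_(i <- r) F) (at level 41, i, r at level 50).

Lemma ideal_gen_ideal (G : T -> Prop) : isI (gen G).
Proof.
split=> [I [] //| u v hu hv I hI hG | r u hu I hI hG]; case: (hI) => _ hD hM.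
  by apply: hD; [exact: hu | exact: hv].
by apply: hM; exact: hu.
Qed.

Lemma ideal_gen_in (G : T -> Prop) u : G u -> gen G u.
Proof. by move=> hu I _; apply. Qed.

Lemma ideal_gen_min (G I : T -> Prop) :
  isI I -> (forall u, G u -> I u) -> forall u, gen G u -> I u.
Proof. by move=> hI hG u; apply. Qed.

Lemma ideal_gen_ext (G G' : T -> Prop) :
  (forall u, G u <-> G' u) -> forall u, gen G u <-> gen G' u.
Proof.
move=> hG u; split; apply: ideal_gen_min (ideal_gen_ideal _) _ u => v hv.
  by apply: ideal_gen_in; apply/hG.
by apply: ideal_gen_in; apply/hG.
Qed.

Lemma ideal_cap (I : Type) (V : I -> Prop) (R : I -> T -> Prop) :
  (forall i, V i -> isI (R i)) -> isI (fun u => forall i, V i -> R i u).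
Proof.
move=> hR; split=> [i /hR[] // | u v hu hv i hi | r u hu i hi]; have [_ hD hM] := hR i hi.
  by apply: hD; [exact: hu | exact: hv].
by apply: hM; exact: hu.
Qed.

Lemma ideal_sum_min (I J R : T -> Prop) : isI R ->
  (forall u, I u -> R u) -> (forall u, J u -> R u) ->
  forall u, ideal_sum add mul zero I J u -> R u.
Proof. by move=> hR hI hJ; apply: ideal_gen_min => // u [/hI | /hJ]. Qed.

Lemma ideal_mul_min (I J R : T -> Prop) : isI R ->
  (forall u v, I u -> J v -> R (mul u v)) ->
  forall w, ideal_mul add mul zero I J w -> R w.
Proof. by move=> hR h; apply: ideal_gen_min => // _ [u [v [hu hv ->]]]; exact: h. Qed.

Lemma principal_min (c : T) (R : T -> Prop) :
  isI R -> R c -> forall u, principal add mul zero c u -> R u.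
Proof. by move=> hR hc; apply: ideal_gen_min => // u ->. Qed.

Lemma principal_self (c : T) : principal add mul zero c c.
Proof. exact: ideal_gen_in. Qed.

Lemma principal_mul (c r : T) : principal add mul zero c (mul r c).
Proof.
by have [_ _ hM] := ideal_gen_ideal (fun z => z = c); apply: hM; apply: ideal_gen_in.
Qed.

Lemma big_ideal_sum_min (I : Type) (r : seq I) (F : I -> T -> Prop) (R : T -> Prop) :
  isI R -> (forall i u, F i u -> R u) -> forall u, (\bigsum_(i <- r) F i) u -> R u.
Proof.
move=> hR hF; elim/big_rec: _ => [|i J _ hJ]; first exact: ideal_gen_min.
exact: ideal_sum_min (hF i) hJ.
Qed.

Lemma mem_big_ideal_sum (I : eqType) (r : seq I) (F : I -> T -> Prop) i u :
  i \in r -> F i u -> (\bigsum_(j <- r) F j) u.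
Proof.
elim: r => [|j r IH] //; rewrite big_cons inE => /orP[/eqP <- | /IH hi] hu.
  by apply: ideal_gen_in; left.
by apply: ideal_gen_in; right; exact: hi.
Qed.

End IdealGen.

Section MonomialIdeals.
Variables (K : fieldType) (m : nat).
Local Notation PS := (ps K m).
Local Notation isI := (is_ideal (@ps_add K m) (@ps_mul K m) (@ps_zero K m)).
Local Notation Ypow := (Sideal_pow (@Yideal K m)).

Definition monomial_ideal (P : mon m -> Prop) : PS -> Prop :=
  Sideal_gen (fun z => exists2 e, P e & z = ps_ind K e).

Lemma ps_ideal_mul_preim (c : PS) (R : PS -> Prop) :
  isI R -> isI (fun u => R (ps_mul c u)).
Proof.
case=> h0 hD hM; split=> [|u v hu hv|r u hu]; first by rewrite ps_mulr0.
  by rewrite ps_mulDr; apply: hD.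
by rewrite ps_mulCA; apply: hM.
Qed.

Lemma monomial_ideal_mul (P Q PQ : mon m -> Prop) :
  (forall p q, P p -> Q q -> PQ (madd p q)) ->
  forall u v, monomial_ideal P u -> monomial_ideal Q v -> monomial_ideal PQ (ps_mul u v).
Proof.
move=> hPQ u v hu hv; move: v hv u hu.
have hPQI := ideal_gen_ideal (@ps_add K m) (@ps_mul K m) (@ps_zero K m)
  (fun z => exists2 e, PQ e & z = ps_ind K e).
apply: ideal_gen_min.
  by apply: ideal_cap => u _; exact: ps_ideal_mul_preim.
move=> _ [q hq ->] u; rewrite ps_mulC.
apply: ideal_gen_min (ps_ideal_mul_preim _ hPQI) _ u => _ [p hp ->].
by rewrite ps_ind_mul maddC; apply: ideal_gen_in; exists (madd p q) => //; exact: hPQ.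
Qed.

Lemma principal_monomial_ideal (P : mon m -> Prop) e u :
  P e -> Sprincipal (ps_ind K e) u -> monomial_ideal P u.
Proof.
move=> he; apply: principal_min; first exact: ideal_gen_ideal.
by apply: ideal_gen_in; exists e.
Qed.

Lemma Ypow_monomial j u :
  Ypow j u -> monomial_ideal (fun e => e.1 = 0%N /\ (j <= mdeg e)%N) u.
Proof.
elim: j u => [|j IH] u.
  exact: (principal_monomial_ideal (e := mzero m) (conj erefl (leq0n _))).
apply: ideal_mul_min; first exact: ideal_gen_ideal.
move=> y v hy /IH hv.
apply: (monomial_ideal_mul (P := fun e => e.1 = 0%N /\ (1 <= mdeg e)%N)) hv.
  by move=> p q [/= -> hp] [-> hq]; rewrite mdeg_madd; split => //; lia.
apply: ideal_gen_min hy; first exact: ideal_gen_ideal.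
move=> _ [i ->]; apply: ideal_gen_in; exists (0%N, [ffun l => nat_of_bool (l == i)]) => //.
by split => //; rewrite /mdeg (bigD1 i) //= ffunE eqxx.
Qed.

Lemma ymon_Ypow j (al : {ffun 'I_m -> nat}) :
  (j <= \sum_(i < m) al i)%N -> Ypow j (ps_ind K ((0%N, al) : mon m)).
Proof.
elim: j al => [|j IH] al hj.
  by rewrite -[ps_ind _ _]ps_mulr1; apply: principal_mul.
have [i al_i] : exists i, (0 < al i)%N.
  apply/existsP; apply: contraLR hj; rewrite negb_exists => /forallP al0.
  by rewrite -leqNgt big1 // => i _; apply/eqP; rewrite -leqn0 leqNgt al0.
pose be := [ffun l => (al l - (l == i))%N].
have sum_be : (\sum_(l < m) be l).+1 = (\sum_(l < m) al l)%N.
  rewrite (bigD1 i) //= [RHS](bigD1 i) //= ffunE eqxx -addSn; congr addn; first lia.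
  by apply: eq_bigr => l /negbTE nli; rewrite ffunE nli subn0.
apply: ideal_gen_in; exists (ps_y K i), (ps_ind K ((0%N, be) : mon m)); split.
- by apply: ideal_gen_in; exists i.
- by apply: IH; rewrite -ltnS sum_be.
- rewrite /ps_y ps_ind_mul; congr ps_ind; apply: monP => //= l.
  by rewrite !ffunE; case: eqP => [->|]; lia.
Qed.

Lemma IS_monomialE (a' b' N : nat) u :
  IS a' b' N u <-> monomial_ideal (fun e => (N <= e.1 * b' + mdeg e * a')%N) u.
Proof.
apply: ideal_gen_ext => z; split => [[k [al [hN ->]]] | [[k al] hN ->]].
  by rewrite ps_monomialE; exists (k, al).
by exists k, al; rewrite ps_monomialE.
Qed.

End MonomialIdeals.

Lemma divn_mul_reduce k a b d : (0 < d)%N -> (d %| a)%N -> (d %| b)%N ->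
  (k * b %/ a = k * (b %/ d) %/ (a %/ d))%N.
Proof. by move=> d_gt0 /divnK {1}<- /divnK {1}<-; rewrite mulnA divnMr. Qed.

Lemma leq_subn_divn n k s c : (0 < c)%N -> (n - k %/ c <= s)%N = (n * c <= k + s * c)%N.
Proof.
by move=> c_gt0; rewrite leq_subLR addnC -leq_subLR leq_divRL // mulnBl leq_subLR addnC.
Qed.

Section Proposition.
Variables (K : fieldType) (m a b : nat) (g : ps K m).
Hypotheses (a_gt0 : (0 < a)%N) (g_Yb : Sideal_pow (@Yideal K m) b g).
Local Notation a' := (a %/ gcdn a b)%N.
Local Notation b' := (b %/ gcdn a b)%N.
Local Notation weight e := (e.1 * b' + mdeg e * a')%N.
Local Notation f := (ps_sub (ps_pow (@ps_x K m) a) g).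
Local Notation divx_a e := (msub e (a, [ffun => 0%N])).

Lemma reduced_a_gt0 : (0 < a')%N.
Proof. by rewrite divn_gt0 ?gcdn_gt0 ?a_gt0 // dvdn_leq // dvdn_gcdl. Qed.

Lemma nk_reduced k : nk a b k = (k * b' %/ a')%N.
Proof.
by rewrite /nk (@divn_mul_reduce _ _ _ (gcdn a b)) ?dvdn_gcdl ?dvdn_gcdr ?gcdn_gt0 ?a_gt0.
Qed.

Lemma low_monomial_in_JS n (e : mon m) :
  (e.1 < a)%N -> (n * a' <= weight e)%N -> JS a b n (ps_ind K e).
Proof.
move=> lt_ea hw.
have -> : ps_ind K e = ps_mul (ps_pow (@ps_x K m) e.1) (ps_ind K ((0%N, e.2) : mon m)).
  by rewrite ps_pow_x ps_ind_mul; congr ps_ind; apply: monP => /= [|i]; rewrite ?ffunE; lia.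
apply: (mem_big_ideal_sum _ _ _ (i := Ordinal lt_ea)); first exact: mem_index_enum.
apply: ideal_gen_in; do 2 eexists; split; [exact: principal_self | | by []].
by apply: ymon_Ypow; rewrite nk_reduced leq_subn_divn // reduced_a_gt0.
Qed.

Lemma JS_sub_IS n (u : ps K m) : JS a b n u -> IS a' b' (n * a') u.
Proof.
move=> hu; apply/IS_monomialE; move: u hu.
apply: big_ideal_sum_min; first exact: ideal_gen_ideal.
move=> k; apply: ideal_mul_min; first exact: ideal_gen_ideal.
move=> u v; rewrite ps_pow_x => /(principal_monomial_ideal (erefl _)) hu /Ypow_monomial hv.
apply: (monomial_ideal_mul _ hu hv) => _ q <- [/= q0 hq].
rewrite nk_reduced leq_subn_divn ?reduced_a_gt0 // in hq.
rewrite mdeg_madd /= q0 addn0 /mdeg big1 ?add0n // => i _; exact: ffunE.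
Qed.

Lemma ps_ind_reduce (e : mon m) : (a <= e.1)%N ->
  ps_ind K e = ps_add (ps_mul (ps_ind K (divx_a e)) f) (ps_mul (ps_ind K (divx_a e)) g).
Proof.
move=> le_ae; rewrite /ps_sub ps_mulDr ps_mulrN ps_pow_x ps_ind_mul.
have -> : madd (divx_a e) (a, [ffun => 0%N]) = e.
  by apply: monP => /= [|i]; rewrite ?ffunE; lia.
by apply: ps_ext => x; rewrite /ps_add /ps_opp addrNK.
Qed.

Lemma mul_g_monomial (e : mon m) : (a <= e.1)%N ->
  monomial_ideal (fun q => (q.1 < e.1)%N /\ (weight e <= weight q)%N)
    (ps_mul (ps_ind K (divx_a e)) g).
Proof.
move=> le_ae.
have hu : monomial_ideal (eq (divx_a e)) (ps_ind K (divx_a e)).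
  by apply: ideal_gen_in; exists (divx_a e).
apply: (monomial_ideal_mul _ hu (Ypow_monomial g_Yb)) => _ q <- [/= q0 hq].
rewrite q0 addn0 mdeg_madd; split; first lia.
have -> : mdeg (divx_a e) = mdeg e.
  by apply: eq_bigr => i _; rewrite !ffunE subn0.
have cross := muln_divCA_gcd a b; have := leq_mul hq (leqnn a').
rewrite mulnBl mulnDl; have := leq_mul le_ae (leqnn b'); lia.
Qed.

Lemma IS_sub_JS_f n (u : ps K m) :
  IS a' b' (n * a') u -> Sideal_sum (JS a b n) (Sprincipal f) u.
Proof.
have hL := ideal_gen_ideal (@ps_add K m) (@ps_mul K m) (@ps_zero K m)
  (fun z => JS a b n z \/ Sprincipal f z).
move/IS_monomialE; apply: (ideal_gen_min hL) u => _ [e + ->].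
suff: forall k e, e.1 = k -> (n * a' <= weight e)%N ->
    Sideal_sum (JS a b n) (Sprincipal f) (ps_ind K e).
  by move/(_ _ e erefl).
elim/ltn_ind => k IH {}e ek hw.
have [lt_ea|le_ae] := ltnP e.1 a.
  by apply: ideal_gen_in; left; exact: low_monomial_in_JS.
have [_ hD hM] := hL; rewrite (ps_ind_reduce le_ae); apply: hD.
  by apply: hM; apply: ideal_gen_in; right; exact: principal_self.
apply: (ideal_gen_min hL) _ (mul_g_monomial le_ae) => _ [q [lt_qe hwq] ->].
by apply: (IH q.1) => //; [rewrite -ek | exact: leq_trans hwq].
Qed.

End Proposition.

Theorem proposition5p1 (K : closedFieldType) (m a b : nat) (g : ps K m) :
  (1 <= m)%N -> (2 <= a)%N -> (a <= b)%N ->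
  only_y g ->
  Sideal_pow (@Yideal K m) b g -> ~ Sideal_pow (@Yideal K m) b.+1 g ->
  let d := gcdn a b in
  let a' := (a %/ d)%N in
  let b' := (b %/ d)%N in
  let f := ps_sub (ps_pow (@ps_x K m) a) g in
  forall n : nat, (1 <= n)%N ->
  forall z : ps K m,
    Sideal_sum (@JS K m a b n) (Sprincipal f) z <->
    Sideal_sum (@IS K m a' b' (n * a')) (Sprincipal f) z.
Proof.
move=> _ a_ge2 _ _ g_Yb _ d a' b' f n _ z.
have a_gt0 : (0 < a)%N by exact: ltnW.
split; apply: ideal_sum_min; try exact: ideal_gen_ideal.
- by move=> u /(JS_sub_IS a_gt0) hu; apply: ideal_gen_in; left.
- by move=> u hu; apply: ideal_gen_in; right.
- exact: IS_sub_JS_f.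
- by move=> u hu; apply: ideal_gen_in; right.
Qed.
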